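(* Let $\delta\in(0,1)$, $t\ge0$ and $\boldsymbol{x}\in\mathcal{X}$. Then, with probability at least $1-\delta$ (with respect to $f_t$ distributed as the Gaussian process posterior), $$|p_{t,\boldsymbol{x}}-\mu_t^{(p)}(\boldsymbol{x})|<\delta^{-1/2}\gamma_t(\boldsymbol{x}).$$
   Context: $\mathcal{D}\subset\mathbb{R}^d$ is compact, $\mathcal{X}\subset\mathcal{D}$ finite, $h\in\mathbb{R}$ a threshold, and for each $\boldsymbol{x}\in\mathcal{X}$, $g(\cdot\mid\boldsymbol{\theta}_{\boldsymbol{x}})$ is a probability density on $\mathcal{D}$. An unknown $f:\mathcal{D}\to\mathbb{R}$ has Gaussian process prior $\mathcal{GP}(0,k)$ and, after observing data $\{(\boldsymbol{s}_j,y_j)\}_{j=1}^t$ with $y_j=f(\boldsymbol{s}_j)+$ independent $\mathcal{N}(0,\sigma^2)$ noise, $f_t$ denotes a random function distributed according to the GP posterior, with posterior mean $\mu_t$ and variance $\sigma_t^2$. Define $p_{t,\boldsymbol{x}}=\int_{\mathcal{D}}\mathbf{1}[f_t(\boldsymbol{s})<h]\,g(\boldsymbol{s}\mid\boldsymbol{\theta}_{\boldsymbol{x}})\,d\boldsymbol{s}$, $\Phi_{\boldsymbol{s}}=\Phi((h-\mu_t(\boldsymbol{s}))/\sigma_t(\boldsymbol{s}))$ with $\Phi$ the standard normal cdf, $\mu_t^{(p)}(\boldsymbol{x})=\mathbb{E}[p_{t,\boldsymbol{x}}]=\int_{\mathcal{D}}\Phi_{\boldsymbol{s}}\,g(\boldsymbol{s}\mid\boldsymbol{\theta}_{\boldsymbol{x}})d\boldsymbol{s}$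 and $\gamma_t^2(\boldsymbol{x})=\int_{\mathcal{D}}\mathrm{Var}[\mathbf{1}[f_t(\boldsymbol{s})<h]]\,g(\boldsymbol{s}\mid\boldsymbol{\theta}_{\boldsymbol{x}})d\boldsymbol{s}=\int_{\mathcal{D}}\Phi_{\boldsymbol{s}}(1-\Phi_{\boldsymbol{s}})\,g(\boldsymbol{s}\mid\boldsymbol{\theta}_{\boldsymbol{x}})d\boldsymbol{s}$. *)

From HB Require Import structures.
From mathcomp Require Import all_boot all_order all_algebra.
From mathcomp Require Import all_classical all_reals all_analysis.
Set Implicit Arguments. Unset Strict Implicit. Unset Printing Implicit Defensive.
Import Order.TTheory GRing.Theory Num.Theory.
Local Open Scope classical_set_scope.
Local Open Scope ring_scope.

Definition std_normal_cdf {R : realType} (x : R) : R :=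
  fine (normal_prob 0 1 `]-oo, x]).

(* Y is a (possibly degenerate) Gaussian random variable N(m, v) under P.
   (The library's normal_prob m 0 is not the Dirac mass, so the degenerate
   case v = 0 is spelled out as "Y = m almost surely".) *)
Definition is_gaussian {R : realType} (dO : measure_display)
  (Omega : measurableType dO) (P : probability Omega R)
  (Y : Omega -> R) (m v : R) : Prop :=
  0 <= v /\
  (v = 0 -> P [set w | Y w = m] = 1%E) /\
  (0 < v -> forall A : set R, measurable A ->
      P (Y @^-1` A) = normal_prob m (Num.sqrt v) A).

Definition gram {R : realType} {T : Type} (k : T -> T -> R) (t : nat)
  (s : 'I_t -> T) : 'M[R]_t := \matrix_(i, j) k (s i) (s j).

Definition kvec {R : realType} {T : Type} (k : T -> T -> R) (t : nat)
  (s : 'I_t -> T) (x : T) : 'cV[R]_t := \col_i k (s i) x.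

Definition post_mean {R : realType} {T : Type} (k : T -> T -> R) (sigma : R)
  (t : nat) (s : 'I_t -> T) (y : 'I_t -> R) (x : T) : R :=
  ((kvec k s x)^T *m invmx (gram k s + (sigma ^+ 2)%:M) *m \col_i y i) 0 0.

Definition post_cov {R : realType} {T : Type} (k : T -> T -> R) (sigma : R)
  (t : nat) (s : 'I_t -> T) (x x' : T) : R :=
  k x x' - ((kvec k s x)^T *m invmx (gram k s + (sigma ^+ 2)%:M) *m kvec k s x') 0 0.

Definition post_sd {R : realType} {T : Type} (k : T -> T -> R) (sigma : R)
  (t : nat) (s : 'I_t -> T) (x : T) : R :=
  Num.sqrt (post_cov k sigma s x x).

Definition psd_kernel_on {R : realType} {T : Type} (D : set T)
  (k : T -> T -> R) : Prop :=
  (forall x x', D x -> D x' -> k x x' = k x' x) /\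
  (forall (n : nat) (ss : 'I_n -> T) (a : 'I_n -> R), (forall i, D (ss i)) ->
     0 <= \sum_(i < n) \sum_(j < n) a i * a j * k (ss i) (ss j)).

Definition is_GP {R : realType} (dO : measure_display)
  (Omega : measurableType dO) (P : probability Omega R) {T : Type}
  (D : set T) (F : Omega -> T -> R) (m : T -> R) (c : T -> T -> R) : Prop :=
  forall (n : nat) (ss : 'I_n -> T) (a : 'I_n -> R), (forall i, D (ss i)) ->
    is_gaussian P (fun w => \sum_(i < n) a i * F w (ss i))
      (\sum_(i < n) a i * m (ss i))
      (\sum_(i < n) \sum_(j < n) a i * a j * c (ss i) (ss j)).

Definition Phi_s {R : realType} {T : Type} (k : T -> T -> R) (sigma : R)
  (t : nat) (s : 'I_t -> T) (y : 'I_t -> R) (h : R) (z : T) : R :=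
  std_normal_cdf ((h - post_mean k sigma s y z) / post_sd k sigma s z).

Definition p_tx {R : realType} (d : measure_display) (T : measurableType d)
  (mu : {measure set T -> \bar R}) (D : set T) {Omega : Type}
  (F : Omega -> T -> R) (h : R) (gx : T -> R) (w : Omega) : R :=
  Rintegral mu D (fun z => ((F w z < h)%R%:R : R) * gx z).

Definition mu_p {R : realType} (d : measure_display) (T : measurableType d)
  (mu : {measure set T -> \bar R}) (D : set T) (k : T -> T -> R) (sigma : R)
  (t : nat) (s : 'I_t -> T) (y : 'I_t -> R) (h : R) (gx : T -> R) : R :=
  Rintegral mu D (fun z => Phi_s k sigma s y h z * gx z).

Definition gamma_t {R : realType} (d : measure_display) (T : measurableType d)
  (mu : {measure set T -> \bar R}) (D : set T) (k : T -> T -> R) (sigma : R)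
  (t : nat) (s : 'I_t -> T) (y : 'I_t -> R) (h : R) (gx : T -> R) : R :=
  Num.sqrt (Rintegral mu D (fun z =>
     Phi_s k sigma s y h z * (1 - Phi_s k sigma s y h z) * gx z)).

From HB Require Import structures.
From mathcomp Require Import all_boot all_order all_algebra.
From mathcomp Require Import all_classical all_reals all_analysis.
From mathcomp Require Import ring lra measurable_realfun.

(** Since f_t(s) ~ N(mu_t(s), sigma_t(s)^2), the indicator 1[f_t(s) < h] is a
    Bernoulli variable of mean Phi_s, so p_{t,x} - mu_t^(p)(x) is the average
    of 1[f_t(s) < h] - Phi_s against the probability density g(. | theta_x).
    By Jensen for that density its square is at most the average of
    (1[f_t(s) < h] - Phi_s)^2, whose expectation is, by Tonelli, the average of
    the Bernoulli variances Phi_s (1 - Phi_s), i.e. gamma_t(x)^2.  Chebyshev's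
    inequality at level delta^(-1/2) gamma_t(x) concludes; gamma_t(x) > 0
    because 0 < Phi_s < 1 and g integrates to 1. *)

Set Implicit Arguments.
Unset Strict Implicit.
Unset Printing Implicit Defensive.
Import Order.TTheory GRing.Theory Num.Theory.
Import numFieldNormedType.Exports.
Local Open Scope classical_set_scope.
Local Open Scope ring_scope.

Section standard_normal_cdf.
Variable R : realType.

Lemma normal_prob_fin_num (m s : R) (A : set R) : measurable A ->
  normal_prob m s A \is a fin_num.
Proof.
move=> mA; rewrite ge0_fin_numE ?measure_ge0//.
exact: le_lt_trans (probability_le1 (normal_prob m s) mA) (ltry _).
Qed.

Section standardization.
Variables (m s b : R).
Hypothesis s_gt0 : 0 < s.

Let F (u : R) := (u + m / s) * s.

Let F'E : F^`()%classic = cst s.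
Proof.
apply/funext => u; rewrite /F derive1E deriveM// deriveD// derive_id !derive_cst.
by rewrite scaler0 add0r addr0 scaler1.
Qed.

Let normal_pdf_comp_scale u :
  ((normal_pdf m s \o F) * F^`()%classic) u = normal_pdf 0 1 u.
Proof.
rewrite F'E /= /normal_pdf gt_eqF// oner_eq0 /normal_peak /normal_fun !fctE /F /=.
rewrite mulrDl divfK ?gt_eqF// addrK subr0 expr1n mul1r -mulrnAr.
rewrite sqrtrM ?sqr_ge0// sqrtr_sqr gtr0_norm//.
have hpi : Num.sqrt (pi *+ 2 : R) != 0.
  by rewrite gt_eqF// sqrtr_gt0 pmulrn_lgt0// pi_gt0.
rewrite exprMn; have -> : - (u ^+ 2 * s ^+ 2) / (s ^+ 2 *+ 2) = - u ^+ 2 / 2.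
  by field; rewrite gt_eqF.
by field; rewrite hpi gt_eqF.
Qed.

Lemma normal_prob_ltE :
  normal_prob m s `]-oo, b[ = (std_normal_cdf ((b - m) / s))%:E.
Proof.
have FbE : F ((b - m) / s) = b by rewrite /F -mulrDl subrK divfK ?gt_eqF.
rewrite /std_normal_cdf fineK ?normal_prob_fin_num// /normal_prob.
rewrite integral_itv_bndo_bndc; last first.
  by apply/measurable_EFinP; exact: measurable_funTS (measurable_normal_pdf _ _).
rewrite -[in LHS]FbE increasing_ge0_integration_by_substitutionNy.
- by apply: eq_integral => u _; rewrite normal_pdf_comp_scale.
- by move=> u v _ _ uv; rewrite /F ltr_pM2r// ltrD2r.
- by rewrite F'E => u _; exact: cst_continuous.
- by rewrite F'E; exact: is_cvg_cst.
- by rewrite F'E; exact: cvg_cst.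
- split; first by move=> u _; rewrite /F; apply: derivableM => //; exact: derivableD.
  apply: cvg_at_left_filter; rewrite /F.
  by apply: cvgM; [apply: cvgD; [exact: cvg_id|exact: cvg_cst]|exact: cvg_cst].
- by rewrite /F; apply: gt0_cvgMlNy => //; exact: cvg_addrr_Ny.
- by apply: continuous_subspaceT; apply: continuous_normal_pdf; rewrite gt_eqF.
- by move=> u _; exact: normal_pdf_ge0.
Qed.

End standardization.

Lemma std_normal_prob_itv_gt0 (a b : R) : a < b -> (0 < normal_prob 0 1 `[a, b])%E.
Proof.
move=> ab; pose pdf_lb := normal_peak (1 : R) * expR (- (`|a| + `|b|) ^+ 2 / 2).
have pdf_lb_gt0 : 0 < pdf_lb by rewrite mulr_gt0 ?expR_gt0 ?normal_peak_gt0 ?oner_eq0.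
apply: (@lt_le_trans _ _ (pdf_lb%:E * lebesgue_measure `[a, b])%E).
  by rewrite lebesgue_measure_itv /= lte_fin ab -EFinD lte_fin mulr_gt0 ?subr_gt0.
rewrite -integral_cst//; apply: ge0_le_integral => //.
- by move=> u _; rewrite lee_fin ltW.
- by apply/measurable_EFinP; exact: measurable_funTS (measurable_normal_pdf _ _).
move=> u; rewrite /= in_itv /= => /andP[au ub].
rewrite lee_fin /normal_pdf oner_eq0 /pdf_lb ler_pM2l ?normal_peak_gt0 ?oner_eq0//.
rewrite /normal_fun ler_expR subr0 expr1n !mulNr lerN2 ler_pM2r//.
have := normr_ge0 a; have := normr_ge0 b; have := ler_norm b.
have : - a <= `|a| by rewrite -normrN ler_norm.
by nra.
Qed.

Lemma std_normal_cdf_gt0 (u : R) : 0 < std_normal_cdf u.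
Proof.
rewrite /std_normal_cdf -lte_fin fineK ?normal_prob_fin_num//.
apply: (@lt_le_trans _ _ (normal_prob 0 1 `[u - 1, u])).
  by apply: std_normal_prob_itv_gt0; lra.
apply: le_measure; rewrite ?inE//.
by move=> v /=; rewrite !in_itv /= => /andP[].
Qed.

Lemma std_normal_cdf_lt1 (u : R) : std_normal_cdf u < 1.
Proof.
rewrite /std_normal_cdf -lte_fin fineK ?normal_prob_fin_num//.
have : (0 < normal_prob 0 1 (~` `]-oo, u]))%E.
  apply: (@lt_le_trans _ _ (normal_prob 0 1 `[u + 1, u + 2])).
    by apply: std_normal_prob_itv_gt0; lra.
  apply: le_measure; rewrite ?inE//; first exact: measurableC.
  move=> v; rewrite /= !in_itv /= => /andP[uv _] vu; lra.
by rewrite probability_setC// sube_gt0.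
Qed.

End standard_normal_cdf.

Lemma is_gaussian_prob_ltE (R : realType) (dO : measure_display)
    (Omega : measurableType dO) (P : probability Omega R) (Y : Omega -> R)
    (m v h : R) :
  is_gaussian P Y m v -> 0 < v ->
  P [set w | Y w < h] = (std_normal_cdf ((h - m) / Num.sqrt v))%:E.
Proof.
move=> [_ [_ Ynormal]] v_gt0.
by rewrite -normal_prob_ltE ?sqrtr_gt0// -Ynormal.
Qed.

Lemma is_GP_gaussian (R : realType) (dO : measure_display)
    (Omega : measurableType dO) (P : probability Omega R) (T : Type) (D : set T)
    (F : Omega -> T -> R) (m : T -> R) (c : T -> T -> R) (z : T) :
  is_GP P D F m c -> D z -> is_gaussian P (F^~ z) (m z) (c z z).
Proof.
move=> GP Dz; have := GP 1%N (fun=> z) (fun=> 1) (fun=> Dz).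
rewrite !big_ord1 !mul1r.
have -> // : (fun w => \sum_(i < 1) 1 * F w z) = F^~ z.
by apply/funext => w; rewrite big_ord1 mul1r.
Qed.

Lemma GP_posterior_prob_ltE (R : realType) (T : Type) (D : set T)
    (k : T -> T -> R) (sigma : R) (t : nat) (s : 'I_t -> T) (y : 'I_t -> R)
    (h : R) (dO : measure_display) (Omega : measurableType dO)
    (P : probability Omega R) (f : Omega -> T -> R) (z : T) :
  is_GP P D f (post_mean k sigma s y) (post_cov k sigma s) -> D z ->
  0 < post_sd k sigma s z ->
  P [set w | f w z < h] = (Phi_s k sigma s y h z)%:E.
Proof.
move=> GP Dz; rewrite /Phi_s /post_sd sqrtr_gt0 => cov_gt0.
exact: is_gaussian_prob_ltE (is_GP_gaussian GP Dz) cov_gt0.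
Qed.

Section probability_density.
Variables (R : realType) (d : measure_display) (T : measurableType d).
Variables (mu : {measure set T -> \bar R}) (D : set T) (mD : measurable D).
Variable g : T -> R.
Hypotheses (mg : measurable_fun D g) (g_ge0 : forall z, D z -> 0 <= g z).
Hypothesis g1 : (\int[mu]_(z in D) (g z)%:E = 1)%E.

Lemma integrable_density : mu.-integrable D (EFin \o g).
Proof.
apply/integrableP; split; first exact/measurable_EFinP.
rewrite (eq_integral (fun z => (g z)%:E)) ?g1 ?ltry// => z /set_mem Dz.
by rewrite /= ger0_norm ?g_ge0.
Qed.

Lemma Rintegral_density : \int[mu]_(z in D) g z = 1.
Proof. by rewrite /Rintegral g1. Qed.

Lemma integrable_bounded_mul_density (a : T -> R) (M : R) :
  measurable_fun D a -> (forall z, D z -> `|a z| <= M) ->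
  mu.-integrable D (EFin \o (fun z => a z * g z)).
Proof.
move=> ma aM; have a_bounded : [bounded a z | z in D].
  exists M; split; first exact: num_real.
  by move=> N MN z Dz /=; rewrite (le_trans (aM z Dz))// ltW.
by apply: eq_integrable (integrableMr mD ma a_bounded integrable_density) => // z _.
Qed.

Lemma sqr_Rintegral_density_le (a : T -> R) (M : R) :
  measurable_fun D a -> (forall z, D z -> `|a z| <= M) ->
  (\int[mu]_(z in D) (a z * g z)) ^+ 2 <= \int[mu]_(z in D) (a z ^+ 2 * g z).
Proof.
move=> ma aM; set m := \int[mu]_(z in D) (a z * g z).
have ia := integrable_bounded_mul_density ma aM.
have ia2 : mu.-integrable D (EFin \o (fun z => a z ^+ 2 * g z)).
  apply: (integrable_bounded_mul_density (M := M ^+ 2)); first exact: measurable_funX.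
  move=> z Dz; rewrite normrX lerXn2r ?nnegrE ?aM//.
  exact: le_trans (aM z Dz).
have ig := integrable_density.
have variance_ge0 : 0 <= \int[mu]_(z in D) ((a z - m) ^+ 2 * g z).
  by apply: Rintegral_ge0 => z Dz; rewrite mulr_ge0 ?sqr_ge0 ?g_ge0.
rewrite -subr_ge0; apply: (le_trans variance_ge0) => {variance_ge0}.
have expand : {in D, (fun z => (a z - m) ^+ 2 * g z) =1
    (fun z => a z ^+ 2 * g z - (2 * m * (a z * g z) - m ^+ 2 * g z))}.
  by move=> z _ /=; ring.
rewrite (eq_Rintegral _ expand) RintegralB//; last first.
  exact: eq_integrable (integrableB mD (integrableZl mD _ ia) (integrableZl mD _ ig)).
rewrite RintegralB ?RintegralZl//.
- by rewrite -/m Rintegral_density mulr1 -mulrA -expr2; lra.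
- exact: eq_integrable (integrableZl mD (2 * m) ia).
- exact: eq_integrable (integrableZl mD (m ^+ 2) ig).
Qed.

Lemma Rintegral_mul_density_gt0 (q : T -> R) (M : R) :
  measurable_fun D q -> (forall z, D z -> 0 < q z) -> (forall z, D z -> q z <= M) ->
  0 < \int[mu]_(z in D) (q z * g z).
Proof.
move=> mq q_gt0 qM.
have qg_ge0 z : D z -> 0 <= q z * g z by move=> Dz; rewrite mulr_ge0 ?g_ge0// ltW ?q_gt0.
rewrite lt_neqAle Rintegral_ge0// andbT eq_sym; apply/negP => /eqP qg0.
have iqg : mu.-integrable D (EFin \o (fun z => q z * g z)).
  apply: (integrable_bounded_mul_density (M := M) mq) => z Dz.
  by rewrite ger0_norm ?qM// ltW ?q_gt0.
have mqg : measurable_fun D (EFin \o (fun z => q z * g z)).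
  exact/measurable_EFinP/measurable_funM.
have qg_ae0 : ae_eq mu D (EFin \o (fun z => q z * g z)) (cst 0%E).
  apply/(ae_eq_integral_abs mu mD mqg).
  rewrite (eq_integral (fun z => (q z * g z)%:E)); last first.
    by move=> z /set_mem Dz; rewrite gee0_abs ?lee_fin ?qg_ge0.
  by rewrite -[LHS]fineK ?integrable_fin_num// -[fine _]/(Rintegral _ _ _) qg0.
have g_ae0 : ae_eq mu D (EFin \o g) (cst 0%E).
  apply: filterS qg_ae0 => z qgz Dz; move: (qgz Dz) => /= [/eqP].
  by rewrite mulf_eq0 gt_eqF ?q_gt0//= => /eqP ->.
have mgE : measurable_fun D (EFin \o g) by exact/measurable_EFinP.
have := ae_eq_integral (cst 0%E) (EFin \o g) mD mgE (measurable_cst _) g_ae0.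
by rewrite g1 integral0 => /eqP; rewrite onee_eq0.
Qed.

End probability_density.

Section boolean_events.
Variables (R : realType) (d : measure_display) (Omega : measurableType d).

Lemma indic_setE (b : Omega -> bool) (w : Omega) :
  \1_[set w | b w] w = (b w)%:R :> R.
Proof.
rewrite indicE; have [bw|/negP bw] := boolP (b w).
- by rewrite mem_set.
- by rewrite memNset.
Qed.

Lemma measurable_bool_set (b : Omega -> bool) :
  measurable_fun setT b -> measurable [set w | b w].
Proof. by move=> mb; rewrite -[X in measurable X]setTI -preimage_true; exact: mb. Qed.

End boolean_events.

Section probability_facts.
Local Open Scope ereal_scope.
Variables (R : realType) (d : measure_display) (Omega : measurableType d).
Variable P : probability Omega R.

Lemma integral_sqr_bool_sub (b : Omega -> bool) (p : R) :
  measurable [set w | b w] -> P [set w | b w] = p%:E ->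
  \int[P]_w ((((b w)%:R - p) ^+ 2)%:E) = (p * (1 - p))%:E.
Proof.
set A := [set w | b w] => mA PA.
rewrite (eq_integral (fun w => ((\1_A w - p) ^+ 2)%:E)); last first.
  by move=> w _; rewrite indic_setE.
have split_indic w : ((\1_A w - p) ^+ 2)%:E =
    ((1 - p) ^+ 2)%:E * (\1_A w)%:E + (p ^+ 2)%:E * (\1_(~` A) w)%:E.
  rewrite -!EFinM -EFinD indicC indicE; congr EFin.
  by case: (w \in A) => /=; ring.
have mCA : measurable (~` A) by exact: measurableC.
under eq_integral do rewrite split_indic.
rewrite ge0_integralD//; first last.
- by apply: measurable_funeM; apply/measurable_EFinP; exact: measurable_indic.
- by move=> w _; rewrite mule_ge0 ?lee_fin ?sqr_ge0.
- by apply: measurable_funeM; apply/measurable_EFinP; exact: measurable_indic.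
- by move=> w _; rewrite mule_ge0 ?lee_fin ?sqr_ge0.
rewrite !ge0_integralZl ?lee_fin ?sqr_ge0//; last 2 first.
- by apply/measurable_EFinP; exact: measurable_indic.
- by apply/measurable_EFinP; exact: measurable_indic.
have PCA : P (~` A) = (1 - p)%:E by rewrite probability_setC// PA.
rewrite !integral_indic// !setIT.
(* [P A] now occurs through the generic measure coercion, which [rewrite PA]
   does not match syntactically; [exact] works up to conversion. *)
transitivity (((1 - p) ^+ 2)%:E * p%:E + (p ^+ 2)%:E * (1 - p)%:E).
  by congr (_ * _ + _ * _); [exact: PA|exact: PCA].
by rewrite -!EFinM -EFinD; congr EFin; ring.
Qed.

Lemma sqr_mul_prob_le_integral (X : Omega -> R) (c r : R) :
  measurable_fun setT X -> (0 < r)%R ->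
  (r ^+ 2)%:E * P [set w | r <= `|X w - c|]%R <= \int[P]_w (((X w - c) ^+ 2)%:E).
Proof.
move=> mX r_gt0.
set B := [set w | r <= `|X w - c|]%R.
have mB : measurable B.
  apply/measurable_bool_set/measurable_fun_ler => //.
  by apply: measurableT_comp => //; exact: measurable_funB.
have -> : P B = \int[P]_w (\1_B w)%:E by rewrite integral_indic// setIT.
rewrite -ge0_integralZl//; last 2 first.
- by apply/measurable_EFinP; exact: measurable_indic.
- by rewrite lee_fin sqr_ge0.
apply: ge0_le_integral => //.
- by move=> w _; rewrite mule_ge0 ?lee_fin ?sqr_ge0.
- by apply: measurable_funeM; apply/measurable_EFinP; exact: measurable_indic.
- by apply/measurable_EFinP; apply: measurable_funX; apply: measurable_funB.
move=> w _; rewrite indicE -EFinM lee_fin.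
have [/set_mem rX|_] := boolP (w \in B); last by rewrite mulr0 sqr_ge0.
have r_ge0 := ltW r_gt0.
by rewrite mulr1 -[leRHS]real_normK ?num_real// lerXn2r ?nnegrE// (le_trans r_ge0).
Qed.

End probability_facts.

Section exceedance_fraction.
Variables (R : realType) (d : measure_display) (T : measurableType d).
Variables (mu : {sigma_finite_measure set T -> \bar R}) (D : set T).
Hypothesis mD : measurable D.
Variable g : T -> R.
Hypotheses (mg : measurable_fun D g) (g_ge0 : forall z, D z -> 0 <= g z).
Hypothesis g1 : (\int[mu]_(z in D) (g z)%:E = 1)%E.
Variables (dO : measure_display) (Omega : measurableType dO).
Variables (P : probability Omega R) (f : Omega -> T -> R) (h : R).
Hypothesis mf : measurable_fun setT (fun wz : Omega * T => f wz.1 wz.2).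
Variable Phi : T -> R.
Hypothesis PhiE : forall z, D z -> P [set w | f w z < h] = (Phi z)%:E.
Hypothesis Phi_gt0_lt1 : forall z, D z -> 0 < Phi z < 1.

Let below w z : R := (f w z < h)%R%:R.
Let p := p_tx mu D f h g.
Let p_mean := \int[mu]_(z in D) (Phi z * g z).
Let gamma2 := \int[mu]_(z in D) (Phi z * (1 - Phi z) * g z).

Let integrable_mul_density (a : T -> R) :
  measurable_fun D a -> (forall z, D z -> `|a z| <= 1) ->
  mu.-integrable D (EFin \o (fun z => a z * g z)).
Proof. exact: integrable_bounded_mul_density. Qed.

Let measurable_below : measurable_fun setT (fun wz : Omega * T => below wz.1 wz.2).
Proof.
rewrite (_ : (fun wz => _) = \1_[set wz | f wz.1 wz.2 < h]).
  exact/measurable_indic/measurable_bool_set/measurable_fun_ltr.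
by apply/funext => wz; rewrite indic_setE.
Qed.

Let measurable_below_at z : measurable [set w | f w z < h].
Proof.
apply/measurable_bool_set/measurable_fun_ltr => //.
exact: measurableT_comp mf (pair2_measurable z).
Qed.

Lemma measurable_exceedance_prob : measurable_fun D Phi.
Proof.
apply/measurable_EFinP.
have mbelow : measurable_fun setT (EFin \o (fun wz => below wz.1 wz.2)).
  exact/measurable_EFinP.
have below_ge0 wz : (0 <= (EFin \o (fun wz => below wz.1 wz.2)) wz)%E.
  by rewrite lee_fin ler0n.
apply: eq_measurable_fun (measurable_funTS
  (measurable_fun_fubini_tonelli_G (m1 := P) _ mbelow below_ge0)) => z /set_mem Dz.
rewrite /fubini_G /= -PhiE// -[in RHS](setIT [set w | _]) -integral_indic//.
by apply: eq_integral => w _; rewrite indic_setE.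
Qed.

Let measurable_gD : measurable_fun setT (g \_ D).
Proof. exact: (measurable_restrictT _ mD).1 mg. Qed.

Let gD_ge0 z : 0 <= (g \_ D) z.
Proof. by rewrite patchE; case: ifPn => // /set_mem; exact: g_ge0. Qed.

Lemma measurable_p_tx : measurable_fun setT p.
Proof.
pose F wz := ((below wz.1 wz.2 * (g \_ D) wz.2)%:E).
have mF : measurable_fun setT F.
  apply/measurable_EFinP/measurable_funM => //.
  exact: measurableT_comp measurable_gD measurable_snd.
have F_ge0 wz : (0 <= F wz)%E by rewrite lee_fin mulr_ge0.
rewrite (_ : p = fine \o fubini_F mu F).
  exact/measurableT_comp/measurable_fun_fubini_tonelli_F.
apply/funext => w; rewrite /p /p_tx /Rintegral integral_mkcond /=.
by congr fine; apply: eq_integral => z _; rewrite /F !patchE; case: ifPn; rewrite ?mulr0.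
Qed.

Let below_sub_bound w z : D z -> `|below w z - Phi z| <= 1.
Proof.
move=> Dz; have /andP[Phi_gt0 Phi_lt1] := Phi_gt0_lt1 Dz.
by rewrite /below; case: (_ < _)%R; rewrite ler_norml /=; apply/andP; split; lra.
Qed.

Let measurable_below_sub w : measurable_fun D (fun z => below w z - Phi z).
Proof.
apply: measurable_funB measurable_exceedance_prob.
exact: measurable_funTS (measurableT_comp measurable_below (pair1_measurable w)).
Qed.

Lemma sqr_p_tx_sub_le w :
  (p w - p_mean) ^+ 2 <= \int[mu]_(z in D) ((below w z - Phi z) ^+ 2 * g z).
Proof.
have -> : p w - p_mean = \int[mu]_(z in D) ((below w z - Phi z) * g z).
  rewrite /p /p_mean /p_tx -RintegralB//.
  - by apply: eq_Rintegral => z _; rewrite mulrBl.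
  - apply: integrable_mul_density => [|z Dz].
      exact: measurable_funTS (measurableT_comp measurable_below (pair1_measurable w)).
    by rewrite /below; case: (_ < _)%R; rewrite ?normr1 ?normr0.
  - apply: integrable_mul_density => [|z Dz]; first exact: measurable_exceedance_prob.
    by have /andP[? ?] := Phi_gt0_lt1 Dz; rewrite ger0_norm ?ltW.
exact: (sqr_Rintegral_density_le mD mg g_ge0 g1 (measurable_below_sub w)
  (below_sub_bound w)).
Qed.

Let measurable_bernoulli_var : measurable_fun D (fun z => Phi z * (1 - Phi z)).
Proof.
have mPhi := measurable_exceedance_prob.
by apply: measurable_funM => //; exact: measurable_funB.
Qed.

Let bernoulli_var_gt0 z : D z -> 0 < Phi z * (1 - Phi z).
Proof. by move=> /Phi_gt0_lt1 /andP[? ?]; rewrite mulr_gt0 ?subr_gt0. Qed.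

Let bernoulli_var_le1 z : D z -> Phi z * (1 - Phi z) <= 1.
Proof. by move=> /Phi_gt0_lt1 /andP[? ?]; nra. Qed.

Let sqr_dev wz := (((below wz.1 wz.2 - (Phi \_ D) wz.2) ^+ 2 * (g \_ D) wz.2)%:E).

Let measurable_sqr_dev : measurable_fun setT sqr_dev.
Proof.
apply/measurable_EFinP/measurable_funM; last first.
  exact: measurableT_comp measurable_gD measurable_snd.
apply/measurable_funX/measurable_funB => //.
apply: measurableT_comp measurable_snd.
exact: (measurable_restrictT _ mD).1 measurable_exceedance_prob.
Qed.

Let sqr_dev_ge0 wz : (0 <= sqr_dev wz)%E.
Proof. by rewrite lee_fin mulr_ge0 ?sqr_ge0. Qed.

Let integral_sqr_dev_space w : (\int[mu]_z sqr_dev (w, z) =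
  (\int[mu]_(z in D) ((below w z - Phi z) ^+ 2 * g z))%:E)%E.
Proof.
rewrite fineK; last first.
  apply: integrable_fin_num => //; apply: integrable_mul_density => [|z Dz].
    exact/measurable_funX/measurable_below_sub.
  by rewrite normrX expr_le1// below_sub_bound.
rewrite [RHS]integral_mkcond; apply: eq_integral => z _.
by rewrite /sqr_dev /= !patchE; case: ifPn; rewrite ?mulr0.
Qed.

Let integral_sqr_dev_prob z : (\int[P]_w sqr_dev (w, z) =
  ((fun z => (Phi z * (1 - Phi z) * g z)%:E) \_ D) z)%E.
Proof.
rewrite patchE; case: ifPn => [/set_mem Dz|Dz]; last first.
  by rewrite integral0_eq// => w _; rewrite /sqr_dev /= !patchE (negbTE Dz) mulr0.
transitivity (\int[P]_w ((((f w z < h)%R%:R - Phi z) ^+ 2)%:E * (g z)%:E))%E.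
  by apply: eq_integral => w _; rewrite /sqr_dev /= !patchE mem_set.
rewrite ge0_integralZr ?lee_fin ?g_ge0//; last 2 first.
- apply/measurable_EFinP/measurable_funX/measurable_funB => //.
  exact: measurableT_comp measurable_below (pair2_measurable z).
- by move=> w _; rewrite lee_fin sqr_ge0.
by rewrite (integral_sqr_bool_sub (b := fun w => f w z < h)) ?PhiE.
Qed.

Lemma integral_sqr_p_tx_sub_le : (\int[P]_w ((p w - p_mean) ^+ 2)%:E <= gamma2%:E)%E.
Proof.
apply: (@le_trans _ _ (\int[P]_w \int[mu]_z sqr_dev (w, z))%E).
  apply: ge0_le_integral => //.
  - by move=> w _; rewrite lee_fin sqr_ge0.
  - apply/measurable_EFinP/measurable_funX/measurable_funB => //.
    exact: measurable_p_tx.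
  - exact: measurable_fun_fubini_tonelli_F.
  by move=> w _; rewrite integral_sqr_dev_space lee_fin sqr_p_tx_sub_le.
rewrite fubini_tonelli //=; under eq_integral do rewrite integral_sqr_dev_prob.
rewrite -integral_mkcond /gamma2 /Rintegral fineK//.
apply: integrable_fin_num => //; apply: integrable_mul_density => // z Dz.
by rewrite ger0_norm ?bernoulli_var_le1 ?ltW ?bernoulli_var_gt0.
Qed.

Lemma gamma2_gt0 : 0 < gamma2.
Proof.
exact: (Rintegral_mul_density_gt0 mD mg g_ge0 g1 measurable_bernoulli_var
  bernoulli_var_gt0 bernoulli_var_le1).
Qed.

Theorem p_tx_concentration (delta : R) : 0 < delta < 1 ->
  ((1 - delta)%:E <=
   P [set w | (`|p_tx mu D f h g w - \int[mu]_(z in D) (Phi z * g z)|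
     < (Num.sqrt delta)^-1 *
       Num.sqrt (\int[mu]_(z in D) (Phi z * (1 - Phi z) * g z)))%R])%E.
Proof.
move=> /andP[delta_gt0 _]; rewrite -/p_mean -/gamma2 -/p.
set r := (Num.sqrt delta)^-1 * Num.sqrt gamma2.
have r_gt0 : 0 < r by rewrite mulr_gt0 ?invr_gt0 ?sqrtr_gt0 ?gamma2_gt0.
have gamma2E : gamma2 = r ^+ 2 * delta.
  rewrite /r exprMn exprVn !sqr_sqrtr ?ltW ?gamma2_gt0//.
  by field; rewrite gt_eqF.
set B := [set w | r <= `|p w - p_mean|].
have mB : measurable B.
  apply/measurable_bool_set/measurable_fun_ler => //.
  by apply: measurableT_comp => //; apply: measurable_funB => //; exact: measurable_p_tx.
have PB_le : (P B <= delta%:E)%E.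
  have := le_trans (sqr_mul_prob_le_integral P p_mean measurable_p_tx r_gt0)
    integral_sqr_p_tx_sub_le.
  rewrite -/B -(fineK (fin_num_measure _ _ mB)) gamma2E -EFinM !lee_fin.
  by rewrite ler_pM2l ?exprn_gt0.
rewrite (_ : [set w | _] = ~` B); last first.
  by apply/seteqP; split => w /=; rewrite ltNge => /negP.
rewrite probability_setC// -(fineK (fin_num_measure _ _ mB)) -EFinB lee_fin.
by rewrite lerD2l lerN2 -lee_fin fineK ?fin_num_measure.
Qed.

End exceedance_fraction.

Theorem lemma1
  (R : realType)
  (* spatial domain D inside a sigma-finite measure space (T, mu) *)
  (d : measure_display) (T : measurableType d)
  (mu : {measure set T -> \bar R}) (hmu : sigma_finite setT mu)
  (D : set T) (mD : measurable D)
  (* finite candidate set X, densities g(. | theta_x) on D, threshold h *)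
  (X : set T) (finX : finite_set X) (XD : X `<=` D)
  (g : T -> T -> R)
  (hg : forall x, X x ->
     measurable_fun D (g x) /\ (forall z, D z -> 0 <= g x z) /\
     (\int[mu]_(z in D) (g x z)%:E = 1)%E)
  (h : R)
  (* GP prior kernel, noise level, data *)
  (k : T -> T -> R) (hk : psd_kernel_on D k)
  (sigma : R) (hsigma : 0 < sigma)
  (t : nat) (s : 'I_t -> T) (hs : forall j, D (s j)) (y : 'I_t -> R)
  (hsd : forall z, D z -> 0 < post_sd k sigma s z)
  (* f_t: a random function distributed as the GP posterior *)
  (dO : measure_display) (Omega : measurableType dO) (P : probability Omega R)
  (f : Omega -> T -> R)
  (mf : measurable_fun setT (fun wz : Omega * T => f wz.1 wz.2))
  (hf : is_GP P D f (post_mean k sigma s y) (post_cov k sigma s))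
  (delta : R) (hdelta : 0 < delta < 1)
  (x : T) (hx : X x) :
  ((1 - delta)%:E <=
   P [set w | (`| p_tx mu D f h (g x) w - mu_p mu D k sigma s y h (g x) |
              < (Num.sqrt delta)^-1 * gamma_t mu D k sigma s y h (g x))%R])%E.
Proof.
have [mg [g_ge0 g1]] := hg x hx.
pose mu_sigma_finite : {sigma_finite_measure set T -> \bar R} :=
  HB.pack_for (sigma_finite_measure T R) (mu : set T -> \bar R) (Measure.class mu)
    (isSFinite.Build _ _ _ (mu : set T -> \bar R) (sfinite_measure_sigma_finite hmu))
    (isSigmaFinite.Build _ _ _ (mu : set T -> \bar R) hmu).
have PhiE z : D z -> P [set w | f w z < h] = (Phi_s k sigma s y h z)%:E.
  by move=> Dz; exact: GP_posterior_prob_ltE hf Dz (hsd z Dz).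
have Phi_gt0_lt1 z : D z -> 0 < Phi_s k sigma s y h z < 1.
  by rewrite std_normal_cdf_gt0 std_normal_cdf_lt1.
exact: (p_tx_concentration (mu := mu_sigma_finite) mD mg g_ge0 g1 mf PhiE
  Phi_gt0_lt1 hdelta).
Qed.
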